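(* Let $p>5$ be a prime, $q=p^h$, and let $\mathcal{F}$ be the projective closure of $ax^n+by^m=1$ over $\mathbb{F}_q$, with $a,b\in\mathbb{F}_q^*$ and $m,n$ positive integers, $n\ge m>2$, $p\nmid mn$. Assume $\mathcal{F}$ is classical with respect to lines and nonclassical with respect to conics. For $P=(u:v:1)\in\mathcal{F}$ with $uv\ne0$, the osculating conic $\mathcal{H}_P$ to $\mathcal{F}$ at $P$ is the irreducible conic $H_P(X,Y,Z)=0$, where $H_P=au^{n-2}X^2+bv^{m-2}Y^2-Z^2$ if $p\mid(m-2)$ and $p\mid(n-2)$; $H_P=au^{n+1}YZ+bv^{m+1}XZ-XY$ if $p\mid(m+1)$ and $p\mid(n+1)$; $H_P=a^4u^{4n-2}X^2+b^4v^{4m-2}Y^2+Z^2-2a^2b^2u^{2n-1}v^{2m-1}XY-2a^2u^{2n-1}XZ-2b^2v^{2m-1}YZ$ if $p\mid(2m-1)$ and $p\mid(2n-1)$; $H_P=b^2v^{2m-1}YZ-a^2u^{2n-2}X^2+2au^{n-1}XZ-Z^2$ if $p\mid(2m-1)$ and $p\mid(n-1)$; $H_P=au^{n-1}XY+bv^{m+1}Z^2-YZ$ if $p\mid(m+1)$ and $p\mid(n-1)$; $H_P=au^{n-1}XZ+bv^{m-2}Y^2-Z^2$ if $p\mid(m-2)$ and $p\mid(n-1)$; $H_P=au^{n-2}X^2+bv^{m-1}YZ-Z^2$ if $p\mid(m-1)$ and $p\mid(n-2)$; $H_P=a^2u^{2n-1}XZ-b^2v^{2m-2}Y^2+2bv^{m-1}YZ-Z^2$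 if $p\mid(m-1)$ and $p\mid(2n-1)$; $H_P=bv^{m-1}XY+au^{n+1}Z^2-XZ$ if $p\mid(m-1)$ and $p\mid(n+1)$.
   Context: For a point $P$ of a plane curve $\mathcal{F}$, the osculating conic at $P$ is the unique conic $\mathcal{C}$ maximizing the intersection multiplicity $I(P,\mathcal{F}\cap\mathcal{C})$. Classicality w.r.t. lines/conics: with $\varphi_j$ the monomials of degree $s\in\{1,2\}$ in $x,y,1$, $\tau$ separating and $D^{(k)}_\tau$ Hasse derivatives, the order sequence is the lexicographically smallest $\varepsilon_0<\dots<\varepsilon_M$ ($M=\binom{s+2}{2}-1$) with $\det(D^{(\varepsilon_i)}_\tau\varphi_j)\ne0$, and the curve is classical if $\varepsilon_i=i$ for all $i$, nonclassical otherwise. *)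

From HB Require Import structures.
From mathcomp Require Import all_boot all_order all_algebra.
Set Implicit Arguments. Unset Strict Implicit. Unset Printing Implicit Defensive.
Import Order.TTheory GRing.Theory Num.Theory.
Local Open Scope ring_scope.

(* Plane conics: c_XX X^2 + c_YY Y^2 + c_ZZ Z^2 + c_XY XY + c_XZ XZ + c_YZ YZ *)
Record conic (L : fieldType) := mkConic {
  cXX : L; cYY : L; cZZ : L; cXY : L; cXZ : L; cYZ : L }.

Definition conic_nonzero (L : fieldType) (C : conic L) : Prop :=
  ~ (cXX C = 0 /\ cYY C = 0 /\ cZZ C = 0 /\ cXY C = 0 /\ cXZ C = 0 /\ cYZ C = 0).

Definition conic_prop (L : fieldType) (C D : conic L) : Prop :=
  exists c : L, c != 0 /\
    (cXX C = c * cXX D /\ cYY C = c * cYY D /\ cZZ C = c * cZZ D /\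
     cXY C = c * cXY D /\ cXZ C = c * cXZ D /\ cYZ C = c * cYZ D).

Definition conic_irreducible (L : fieldType) (C : conic L) : Prop :=
  forall l1 l2 l3 k1 k2 k3 : L,
    ~ (cXX C = l1 * k1 /\ cYY C = l2 * k2 /\ cZZ C = l3 * k3 /\
       cXY C = l1 * k2 + l2 * k1 /\ cXZ C = l1 * k3 + l3 * k1 /\
       cYZ C = l2 * k3 + l3 * k2).

Definition conic_evalp (L : fieldType) (C : conic L) (X Y Z : {poly L}) : {poly L} :=
  cXX C *: (X * X) + cYY C *: (Y * Y) + cZZ C *: (Z * Z)
  + cXY C *: (X * Y) + cXZ C *: (X * Z) + cYZ C *: (Y * Z).

(* Intersection multiplicity at P = (u : v : 1) of the curve            *)
(*   A x^n + B y^m = 1  with a conic C, at a point with u v != 0.       *)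
(* P is a nonsingular point (dF/dy = m B v^(m-1) != 0), with local      *)
(* parameter t = x - u; y = Y(t) is the branch with Y(0) = v.           *)
(* I(P, F /\ C) >= k  iff  C(u + t, Y(t), 1) = 0 mod t^k, where Y is    *)
(* the branch expansion truncated mod t^k (it is unique mod t^k).       *)
Definition imult_ge (L : fieldType) (A B : L) (n m : nat) (u v : L)
    (C : conic L) (k : nat) : Prop :=
  exists Y : {poly L},
    [/\ Y.[0] = v,
        'X^k %| A *: ('X + u%:P) ^+ n + B *: Y ^+ m - 1
      & 'X^k %| conic_evalp C ('X + u%:P) Y 1].

Definition imult_eq (L : fieldType) (A B : L) (n m : nat) (u v : L)
    (C : conic L) (k : nat) : Prop :=
  imult_ge A B n m u v C k /\ ~ imult_ge A B n m u v C k.+1.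

Definition osculating_conic (L : fieldType) (A B : L) (n m : nat) (u v : L)
    (H : conic L) : Prop :=
  conic_nonzero H /\
  exists k : nat, imult_eq A B n m u v H k /\
    forall C : conic L, conic_nonzero C -> ~ conic_prop C H ->
      ~ imult_ge A B n m u v C k.

(* Classicality with respect to curves of degree s (s = 1 lines,        *)
(* s = 2 conics).                                                       *)
Definition monos (s : nat) : seq (nat * nat) :=
  [seq (i, j) | i <- iota 0 s.+1, j <- iota 0 (s - i).+1].

(* Hasse derivatives w.r.t. the separating variable x at a generic point
   (xi, eta) of the curve: D^(i)_x phi = i-th coefficient of the Taylor
   expansion phi(xi + t, Y(t)), Y(t) = Taylor expansion of y.
   wronsk = ( D^(i)_x phi_j )_{0 <= i, j <= M}. *)
Definition wronsk (M : fieldType) (xi : M) (Y : {poly M}) (s : nat)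
    : 'M[M]_(size (monos s)) :=
  \matrix_(i, j) ((('X + xi%:P) ^+ (nth (0, 0) (monos s) j).1
                   * Y ^+ (nth (0, 0) (monos s) j).2)`_i).

(* The curve a x^n + b y^m = 1 over K is classical w.r.t. degree-s curves
   iff its order sequence is 0,1,...,M, i.e. (since 0 < 1 < ... < M is the
   lexicographically smallest candidate) iff det(D^(i)_x phi_j)_{i,j<=M} != 0
   in the function field.  The function field is realised by a generic
   point (xi, eta) in an extension field M of K (xi transcendental over K);
   Y is the Taylor expansion of y at the generic point, truncated at
   order M+1. *)
Definition classical_wrt (K : fieldType) (a b : K) (n m s : nat) : Prop :=
  forall (M : fieldType) (iota : {rmorphism K -> M}) (xi eta : M) (Y : {poly M}),
    (forall q : {poly K}, q != 0 -> (map_poly iota q).[xi] != 0) ->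
    iota a * xi ^+ n + iota b * eta ^+ m = 1 ->
    Y.[0] = eta ->
    'X^(size (monos s)) %| iota a *: ('X + xi%:P) ^+ n + iota b *: Y ^+ m - 1 ->
    \det (wronsk xi Y s) != 0.

Definition osc_irr (L : fieldType) (A B : L) (n m : nat) (u v : L) (H : conic L) :=
  osculating_conic A B n m u v H /\ conic_irreducible H.

From mathcomp Require Import all_boot all_algebra all_field.
From mathcomp Require Import ring zify.
From Stdlib Require Import Classical.
Set Implicit Arguments. Unset Strict Implicit. Unset Printing Implicit Defensive.
Import GRing.Theory.
Local Open Scope ring_scope.

(* At P = (u : v : 1) the curve is smooth, and its branch y = Y(t), t = x - u,
   is determined modulo every t^k by Hensel lifting, so I(P, F /\ C) is the
   order in t of C(u + t, Y(t), 1).  In each of the nine cases the two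
   divisibilities make x^N - u^N and y^M - v^M vanish to order p > 5 at P
   (Frobenius), and the given conic is a polynomial combination of these and
   of the curve's equation, so its contact with F at P is at least 5.  As P is
   not an inflection point, contact >= 5 imposes five independent linear
   conditions on a conic, so this conic is unique up to a scalar; and no conic
   has infinite contact, since 1 - a x^n is separable of degree > 2 and hence
   cannot divide a power of a polynomial of degree <= 2.  Irreducibility
   follows from the nonvanishing of the determinant of the conic. *)

Section PolyDivisibility.
Variable L : fieldType.
Implicit Types P : {poly L}.

Lemma dvdXnP k P : reflect (forall i, (i < k)%N -> P`_i = 0) ('X^k %| P).
Proof.
apply: (iffP idP) => [/dvdpP [Q ->] i ik | P0]; first by rewrite coefMXn ik.
rewrite -(poly_take_drop k P) dvdp_addr ?dvdp_mull //.
have -> : take_poly k P = 0.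
  by apply/polyP => i; rewrite coef_take_poly coef0; case: ltnP => // /P0.
exact: dvdp0.
Qed.

Lemma dvdX_horner0 P : ('X %| P) = (P.[0] == 0).
Proof.
rewrite horner_coef0 -[X in X %| _]expr1.
apply/dvdXnP/eqP => [-> // | P0 [] //].
Qed.

Lemma dvdXnW j k P : (j <= k)%N -> 'X^k %| P -> 'X^j %| P.
Proof. by move=> jk; apply: dvdp_trans; rewrite dvdp_exp2l. Qed.

Lemma dvdXn_size_eq0 k P : 'X^k %| P -> (size P <= k)%N -> P = 0.
Proof.
move=> dvdP szP; apply/eqP; apply: contraTT szP => P_neq0.
by rewrite -ltnNge; have := dvdp_leq P_neq0 dvdP; rewrite size_polyXn.
Qed.

Lemma coprimep_Xn_horner0 k P : P.[0] != 0 -> coprimep ('X^k) P.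
Proof. by move=> P0; rewrite coprimep_sym coprimep_expr // coprimepX /root. Qed.

Lemma pchar_dvdXp_expB p N P : p \in [pchar L] -> (p %| N)%N ->
  'X^p %| P ^+ N - (P`_0 ^+ N)%:P.
Proof.
move=> pL /dvdnP [j ->]; rewrite mulnC !exprM.
have pnat : [pchar {poly L}].-nat p by rewrite pnatE ?(pcharf_prime pL) ?pchar_poly.
have -> : (P`_0 ^+ p ^+ j)%:P = take_poly 1 P ^+ p ^+ j.
  by rewrite !rmorphXn; congr (_ ^+ _ ^+ _); apply/polyP => -[|i]; rewrite coef_take_poly coefC.
rewrite subrXX dvdp_mulr //.
rewrite -{1}(poly_take_drop 1 P) exprDn_pchar // addrAC subrr add0r.
by rewrite exprMn dvdp_mull.
Qed.

Lemma separable_dvdp_exp (f g : {poly L}) k : separable_poly f -> f %| g ^+ k -> f %| g.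
Proof.
move=> sep_f f_dvd; set d := gcdp f g; set e := f %/ d.
have f_eq : f = e * d by rewrite divpK // dvdp_gcdl.
have co_ed : coprimep e d by apply: (separable_coprime sep_f); rewrite -f_eq.
have co_eg : coprimep e g.
  apply/coprimepP => h h_e h_g; move/coprimepP: co_ed; apply => //.
  by rewrite dvdp_gcd h_g andbT (dvdp_trans h_e) // f_eq dvdp_mulr.
have e_unit : e %= 1.
  move/coprimepP: (coprimep_expr k co_eg); apply => //.
  by rewrite (dvdp_trans _ f_dvd) // f_eq dvdp_mulr.
by rewrite f_eq (eqp_dvdl _ (eqp_mulr d e_unit)) mul1r dvdp_gcdr.
Qed.

End PolyDivisibility.

Lemma expr_mulnD (R : semiRingType) (x : R) a k b : x ^+ (a * k + b) = (x ^+ k) ^+ a * x ^+ b.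
Proof. by rewrite exprD mulnC exprM. Qed.

Lemma exists_last_step (P : nat -> Prop) a K0 : P a -> (forall K, (K0 <= K)%N -> ~ P K) ->
  exists k, [/\ (a <= k)%N, P k & ~ P k.+1].
Proof.
move=> Pa notP.
suff: forall d b, (K0 <= b + d)%N -> P b -> exists k, [/\ (b <= k)%N, P k & ~ P k.+1].
  by move=> /(_ K0 a (leq_addl _ _) Pa).
elim=> [|d IH] b b_d Pb; first by rewrite addn0 in b_d; case: (notP b b_d Pb).
case: (classic (P b.+1)) => [Pb1 | ]; last by exists b.
have b1_d : (K0 <= b.+1 + d)%N by rewrite addSnnS.
have [k [b1_k Pk notPk1]] := IH b.+1 b1_d Pb1.
by exists k; split=> //; apply: ltnW.
Qed.

Section QuadraticRemainder.
Variables (R : comRingType) (d1 d0 : R).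

(* [quad_rem k = (e, g)] means y^k = e + g y modulo y^2 + d1 y + d0;
   [quad_rem_norm] is the multiplicativity of the norm of that quadratic extension. *)
Fixpoint quad_rem (k : nat) : R * R :=
  if k is k'.+1 then let: (e, g) := quad_rem k' in (- d0 * g, e - d1 * g)
  else (1, 0).

Lemma quad_rem_norm k : let: (e, g) := quad_rem k in
  e ^+ 2 - d1 * e * g + d0 * g ^+ 2 = d0 ^+ k.
Proof.
elim: k => [|k /=]; first by rewrite /= expr1n !mulr0 subr0 expr0n mulr0 addr0.
by case: (quad_rem k) => e g IH; rewrite [d0 ^+ k.+1]exprS -IH; ring.
Qed.

End QuadraticRemainder.

Lemma quad_rem_dvdp (L : fieldType) (d1 d0 D Y : {poly L}) k :
  D %| Y ^+ 2 + d1 * Y + d0 ->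
  let: (e, g) := quad_rem d1 d0 k in D %| Y ^+ k - (e + Y * g).
Proof.
move=> dvdQ; elim: k => [|k /=]; first by rewrite /= mulr0 addr0 subrr dvdp0.
case: (quad_rem d1 d0 k) => e g IH.
have -> : Y ^+ k.+1 - (- d0 * g + Y * (e - d1 * g))
    = Y * (Y ^+ k - (e + Y * g)) + g * (Y ^+ 2 + d1 * Y + d0) by rewrite [Y ^+ k.+1]exprS; ring.
by rewrite dvdp_add // dvdp_mull.
Qed.

Section Branch.
Variables (L : fieldType) (A B u v : L) (n m : nat).
Hypotheses (B_neq0 : B != 0) (v_neq0 : v != 0) (m_neq0 : m%:R != 0 :> L).
Hypothesis on_curve : A * u ^+ n + B * v ^+ m = 1.

Definition curve_poly (Y : {poly L}) : {poly L} :=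
  A *: ('X + u%:P) ^+ n + B *: Y ^+ m - 1.

Lemma curve_polyB Y1 Y2 : Y1.[0] = v -> Y2.[0] = v ->
  exists2 S : {poly L}, S.[0] = B * (m%:R * v ^+ m.-1) &
    curve_poly Y1 - curve_poly Y2 = (Y1 - Y2) * S.
Proof.
move=> Y1v Y2v; exists (B *: \sum_(i < m) Y1 ^+ (m.-1 - i) * Y2 ^+ i).
  rewrite hornerZ horner_sum; congr (_ * _).
  transitivity (\sum_(i < m) v ^+ m.-1); last by rewrite sumr_const card_ord mulr_natl.
  apply: eq_bigr => i _; rewrite hornerM !horner_exp Y1v Y2v -exprD subnK //.
  by have := ltn_ord i; lia.
by rewrite -scalerAr -subrXX /curve_poly scalerBr -!mul_polyC; ring.
Qed.

Lemma branch_exists k : exists2 Y : {poly L}, Y.[0] = v & 'X^k %| curve_poly Y.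
Proof.
have at_v : (curve_poly v%:P).[0] = 0.
  by rewrite /curve_poly !hornerE on_curve subrr.
elim: k => [|k [Y Yv]]; first by exists v%:P; rewrite ?hornerC ?expr0 ?dvd1p.
case: k => [_|k /dvdpP [R FY]].
  by exists v%:P; rewrite ?hornerC // expr1 dvdX_horner0 at_v.
pose c := - R.[0] / (B * (m%:R * v ^+ m.-1)); pose Y' := Y + c *: 'X^(k.+1).
have Y'v : Y'.[0] = v by rewrite /Y' !hornerE Yv expr0n mulr0 addr0.
have [S S0 FB] := curve_polyB Y'v Yv.
exists Y' => //.
have -> : curve_poly Y' = (R + c *: S) * 'X^(k.+1).
  by rewrite -(subrK (curve_poly Y) (curve_poly Y')) FB FY /Y' addrAC subrr add0r
    -!mul_polyC; ring.
rewrite exprS dvdp_mul // dvdX_horner0 hornerD hornerZ S0 /c.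
by apply/eqP; field; rewrite expf_neq0 ?m_neq0 ?B_neq0.
Qed.

Lemma branch_unique k Y1 Y2 : Y1.[0] = v -> Y2.[0] = v ->
  'X^k %| curve_poly Y1 -> 'X^k %| curve_poly Y2 -> 'X^k %| Y1 - Y2.
Proof.
move=> Y1v Y2v dvd1 dvd2; have [S S0 FB] := curve_polyB Y1v Y2v.
have : 'X^k %| (Y1 - Y2) * S by rewrite -FB dvdp_sub.
by rewrite Gauss_dvdpl // coprimep_Xn_horner0 // S0 !mulf_neq0 ?expf_neq0.
Qed.

End Branch.

Section ConicAlongBranch.
Variables (L : fieldType) (u : L).

Definition conic_ycoef1 (C : conic L) : {poly L} := Poly [:: cXY C * u + cYZ C; cXY C].

Definition conic_ycoef0 (C : conic L) : {poly L} :=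
  Poly [:: cXX C * u ^+ 2 + cXZ C * u + cZZ C; 2 * cXX C * u + cXZ C; cXX C].

Lemma conic_evalpE C Y : conic_evalp C ('X + u%:P) Y 1 =
  cYY C *: Y ^+ 2 + conic_ycoef1 C * Y + conic_ycoef0 C.
Proof.
rewrite /conic_evalp /conic_ycoef1 /conic_ycoef0 /= !cons_poly_def.
by rewrite -!mul_polyC !(rmorphD, rmorphM) /= polyC0 polyC1; ring.
Qed.

Lemma size_conic_ycoef1 C : (size (conic_ycoef1 C) <= 3)%N.
Proof. exact: leq_trans (size_Poly _) _. Qed.

Lemma size_conic_ycoef0 C : (size (conic_ycoef0 C) <= 3)%N.
Proof. exact: size_Poly. Qed.

Lemma conic_evalpB C (Y1 Y2 : {poly L}) :
  conic_evalp C ('X + u%:P) Y1 1 - conic_evalp C ('X + u%:P) Y2 1 =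
  (Y1 - Y2) * (cYY C *: (Y1 + Y2) + conic_ycoef1 C).
Proof. by rewrite !conic_evalpE -!mul_polyC; ring. Qed.

End ConicAlongBranch.

Section FiniteContact.
Variables (L : fieldType) (A B u v : L) (n m : nat).
Hypotheses (A_neq0 : A != 0) (B_neq0 : B != 0) (v_neq0 : v != 0).
Hypotheses (n_neq0 : n%:R != 0 :> L) (n_gt2 : (2 < n)%N) (m_gt0 : (0 < m)%N).

Definition curve_rhs : {poly L} := 1 - A *: ('X + u%:P) ^+ n.

Lemma curve_polyE Y : curve_poly A B u n m Y = B *: Y ^+ m - curve_rhs.
Proof. by rewrite /curve_poly /curve_rhs -!mul_polyC; ring. Qed.

Lemma shift_XaddC : 'X + u%:P = 'X - (- u)%:P.
Proof. by rewrite polyCN opprK. Qed.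

Lemma size_curve_rhs : (3 < size curve_rhs)%N.
Proof.
have coef_n : curve_rhs`_n = - A.
  have monic_pow : ('X + u%:P) ^+ n \is monic by rewrite monic_exp ?monicXaddC.
  have := monic_pow; rewrite monicE lead_coefE shift_XaddC size_exp_XsubC => /eqP.
  by rewrite coefB coefZ coef1 -shift_XaddC => ->; case: n n_gt2 => // k _; rewrite mulr1 sub0r.
case: (ltnP 3 (size curve_rhs)) => // small.
move: coef_n; rewrite nth_default ?(leq_trans small n_gt2) // => /eqP.
by rewrite eq_sym oppr_eq0 (negPf A_neq0).
Qed.

Lemma separable_curve_rhs : separable_poly curve_rhs.
Proof.
rewrite unlock.
have -> : curve_rhs^`() = (- (A * n%:R)) *: ('X + u%:P) ^+ n.-1.
  rewrite /curve_rhs derivB derivC sub0r derivZ deriv_exp derivD derivX derivC.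
  by rewrite addr0 mul1r scaleNr -scalerA scaler_nat.
rewrite coprimepZr ?oppr_eq0 ?mulf_neq0 // coprimep_expr //.
rewrite shift_XaddC coprimep_XsubC /root /curve_rhs !hornerE addNr expr0n.
by case: n n_gt2 => // k _; rewrite mulr0 subr0 oner_eq0.
Qed.

Lemma curve_rhs_dvdp_exp_eq0 (g : {poly L}) k :
  (size g <= 3)%N -> curve_rhs %| g ^+ k -> g = 0.
Proof.
move=> size_g /(separable_dvdp_exp separable_curve_rhs) dvd_g.
apply/eqP; apply: contraTT size_curve_rhs => g_neq0.
by rewrite -leqNgt (leq_trans (dvdp_leq g_neq0 dvd_g)).
Qed.

Lemma linear_in_y_contact_eq0 (c1 c0 : {poly L}) : (size c0 <= 3)%N ->
  exists K0, forall K, (K0 <= K)%N -> forall Y,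
    'X^K %| curve_poly A B u n m Y -> 'X^K %| c1 * Y + c0 -> c1 = 0 /\ c0 = 0.
Proof.
move=> size_c0.
(* T is the resultant in y of c1 y + c0 and B y^m - curve_rhs. *)
pose T := B *: (- c0) ^+ m - c1 ^+ m * curve_rhs.
exists (size T) => K size_T Y dvdF dvd_lin.
have T_eq0 : T = 0.
  apply: (dvdXn_size_eq0 _ size_T).
  have -> : T = c1 ^+ m * curve_poly A B u n m Y - B *: ((c1 * Y) ^+ m - (- c0) ^+ m).
    by rewrite curve_polyE /T exprMn -!mul_polyC; ring.
  by rewrite subrXX opprK dvdp_sub ?dvdp_mull // dvdpZr // dvdp_mulr.
have c0_eq0 : c0 = 0.
  apply/eqP; rewrite -oppr_eq0; apply/eqP/(curve_rhs_dvdp_exp_eq0 (k := m)).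
    by rewrite size_polyN.
  by move/eqP: T_eq0; rewrite subr_eq0 -(dvdpZr _ _ B_neq0) => /eqP ->; rewrite dvdp_mull.
split=> //; move: T_eq0; rewrite /T c0_eq0 oppr0 expr0n gtn_eqF // scaler0 sub0r.
move/eqP; rewrite oppr_eq0 mulf_eq0 expf_eq0 m_gt0 /=.
by case/orP=> /eqP // rhs0; move: size_curve_rhs; rewrite rhs0 size_poly0.
Qed.

Lemma quadratic_in_y_contact_bounded (d1 d0 : {poly L}) :
  (size d1 <= 3)%N -> (size d0 <= 3)%N ->
  exists K0, forall K, (K0 <= K)%N -> forall Y, Y.[0] = v ->
    'X^K %| curve_poly A B u n m Y -> ~ 'X^K %| Y ^+ 2 + d1 * Y + d0.
Proof.
move=> size_d1 size_d0; have [K1 lin] := linear_in_y_contact_eq0 1 size_d1.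
have := quad_rem_norm d1 d0 m; case rem_eq: (quad_rem d1 d0 m) => [e g] norm.
(* Modulo 'X^K and the quadratic, B y^m = curve_rhs and y^m = e + y g, so
   R = B y g; the norm identity then makes T vanish to order K. *)
pose R := curve_rhs - B *: e.
pose T := B ^+ 2 *: d0 ^+ m - curve_rhs * (curve_rhs - (R + R) - B *: (d1 * g)).
exists (maxn (size T) K1) => K; rewrite geq_max => /andP [size_T K1_K] Y Yv dvdF dvdQ.
have dvdR : 'X^K %| R - B *: (Y * g).
  have -> : R - B *: (Y * g) = B *: (Y ^+ m - (e + Y * g)) - curve_poly A B u n m Y.
    by rewrite curve_polyE /R -!mul_polyC; ring.
  by have := quad_rem_dvdp m dvdQ; rewrite rem_eq => dvd_rem; rewrite dvdp_sub // dvdpZr.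
have T_eq0 : T = 0.
  apply: (dvdXn_size_eq0 _ size_T).
  have -> : T = (B *: g) ^+ 2 * (Y ^+ 2 + d1 * Y + d0)
      + (R - B *: (Y * g)) * (R + B *: (Y * g) + d1 * (B *: g)).
    by rewrite /T -norm /R [B ^+ 2]expr2 -scalerA -!mul_polyC; ring.
  by apply: dvdp_add; [apply: dvdp_mull | apply: dvdp_mulr].
have d0_eq0 : d0 = 0.
  apply: (curve_rhs_dvdp_exp_eq0 (k := m) size_d0).
  move/eqP: T_eq0; rewrite subr_eq0 -(dvdpZr _ _ (expf_neq0 2 B_neq0)) => /eqP ->.
  exact: dvdp_mulr.
have dvd_lin : 'X^K %| 1 * Y + d1.
  move: dvdQ; rewrite d0_eq0 addr0 mul1r expr2 -mulrDl Gauss_dvdpl //.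
  by rewrite coprimep_Xn_horner0 // Yv.
by have [/eqP] := lin K K1_K Y dvdF dvd_lin; rewrite oner_eq0.
Qed.

Lemma conic_contact_bounded (C : conic L) : conic_nonzero C ->
  exists K0, forall K, (K0 <= K)%N -> forall Y, Y.[0] = v ->
    'X^K %| curve_poly A B u n m Y -> ~ 'X^K %| conic_evalp C ('X + u%:P) Y 1.
Proof.
move=> C_neq0; case: (eqVneq (cYY C) 0) => [cYY0 | cYY_neq0].
  have [K0 lin] := linear_in_y_contact_eq0 (conic_ycoef1 u C) (size_conic_ycoef0 u C).
  exists K0 => K K0_K Y _ dvdF; rewrite conic_evalpE cYY0 scale0r add0r => dvd_lin.
  have [c1_eq0 c0_eq0] := lin K K0_K Y dvdF dvd_lin; apply: C_neq0.
  have c1 i : (conic_ycoef1 u C)`_i = 0 by rewrite c1_eq0 coef0.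
  have c0 i : (conic_ycoef0 u C)`_i = 0 by rewrite c0_eq0 coef0.
  move: (c1 0%N) (c1 1%N) (c0 0%N) (c0 1%N) (c0 2%N); rewrite !coef_Poly /=.
  move=> cYZ0 cXY0 cZZ0 cXZ0 cXX0.
  rewrite cXY0 mul0r add0r in cYZ0; rewrite cXX0 mulr0 mul0r add0r in cXZ0.
  by rewrite cXX0 cXZ0 !mul0r !add0r in cZZ0.
pose d1 := (cYY C)^-1 *: conic_ycoef1 u C; pose d0 := (cYY C)^-1 *: conic_ycoef0 u C.
have [K0 quad] := quadratic_in_y_contact_bounded (d1 := d1) (d0 := d0)
  (leq_trans (size_scale_leq _ _) (size_conic_ycoef1 u C))
  (leq_trans (size_scale_leq _ _) (size_conic_ycoef0 u C)).
exists K0 => K K0_K Y Yv dvdF; apply: contra_not (quad K K0_K Y Yv dvdF).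
rewrite conic_evalpE -(dvdpZr _ _ (invr_neq0 cYY_neq0)) !scalerDr scalerA mulVf //.
by rewrite scale1r -!scalerAl.
Qed.

End FiniteContact.

Section ConicUniqueness.
Variables (L : fieldType) (u : L).

Definition conic_branch_coef (C : conic L) (y : nat -> L) (i : nat) : L :=
  let a := cXY C * u + cYZ C in let b := cXY C in let c := cYY C in
  match i with
  | 0 => c * (y 0%N * y 0%N) + a * y 0%N + (cXX C * u ^+ 2 + cXZ C * u + cZZ C)
  | 1 => c * (y 0%N * y 1%N + y 1%N * y 0%N) + (a * y 1%N + b * y 0%N)
           + (2 * cXX C * u + cXZ C)
  | 2 => c * (y 0%N * y 2%N + y 1%N * y 1%N + y 2%N * y 0%N) + (a * y 2%N + b * y 1%N)
           + cXX C
  | 3 => c * (y 0%N * y 3%N + y 1%N * y 2%N + y 2%N * y 1%N + y 3%N * y 0%N)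
           + (a * y 3%N + b * y 2%N)
  | 4 => c * (y 0%N * y 4%N + y 1%N * y 3%N + y 2%N * y 2%N + y 3%N * y 1%N + y 4%N * y 0%N)
           + (a * y 4%N + b * y 3%N)
  | _ => 0
  end.

Lemma coef_conic_evalp C Y i : (i < 5)%N ->
  (conic_evalp C ('X + u%:P) Y 1)`_i = conic_branch_coef C (fun j => Y`_j) i.
Proof.
move=> i_lt5; rewrite conic_evalpE !coefD coefZ expr2 !coefM.
case: i i_lt5 => [|[|[|[|[|i]]]]] // _.
all: rewrite !big_ord_recr !big_ord0 /= ?subSS ?subn0 !coef_Poly /= ?nth_nil.
all: by rewrite ?(mulr0, mul0r, addr0, add0r).
Qed.

Definition conic_dy (C : conic L) (y0 : L) : L := 2 * cYY C * y0 + cXY C * u + cYZ C.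

Lemma conic_contact5_dy0_eq0 D (Y : {poly L}) : Y`_2 != 0 -> conic_dy D Y`_0 = 0 ->
    'X^5 %| conic_evalp D ('X + u%:P) Y 1 ->
  cXX D = 0 /\ cYY D = 0 /\ cZZ D = 0 /\ cXY D = 0 /\ cXZ D = 0 /\ cYZ D = 0.
Proof.
move=> y2 Dy /dvdXnP coef0.
have e i : (i < 5)%N -> conic_branch_coef D (fun j => Y`_j) i = 0.
  by move=> i_lt5; rewrite -coef_conic_evalp ?coef0.
have hYZ : cYZ D = - (2 * cYY D * Y`_0 + cXY D * u).
  by apply/eqP; rewrite -subr_eq0 -[X in _ == X]Dy; apply/eqP; rewrite /conic_dy; ring.
have /eqP : (2 * cYY D * Y`_1 + cXY D) * Y`_2 = 0.
  by rewrite -[RHS](e 3%N isT) /= hYZ; ring.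
rewrite mulf_eq0 (negPf y2) orbF => /eqP h3.
have hXY : cXY D = - (2 * cYY D * Y`_1).
  by apply/eqP; rewrite -subr_eq0 -[X in _ == X]h3; apply/eqP; ring.
have /eqP : cYY D * Y`_2 ^+ 2 = 0 by rewrite -[RHS](e 4%N isT) /= hYZ hXY; ring.
rewrite mulf_eq0 expf_eq0 (negPf y2) andbF orbF => /eqP hYY.
rewrite hYY !(mulr0, mul0r, oppr0) in hXY.
rewrite hYY hXY !(mulr0, mul0r, add0r, oppr0) in hYZ.
have hXX : cXX D = 0 by rewrite -[RHS](e 2%N isT) /= hYY hXY hYZ; ring.
have hXZ : cXZ D = 0 by rewrite -[RHS](e 1%N isT) /= hYY hXY hYZ hXX; ring.
have hZZ : cZZ D = 0 by rewrite -[RHS](e 0%N isT) /= hYY hXY hYZ hXX hXZ; ring.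
by do !split.
Qed.

Definition conic_subZ (C H : conic L) (l : L) : conic L :=
  mkConic (cXX C - l * cXX H) (cYY C - l * cYY H) (cZZ C - l * cZZ H)
          (cXY C - l * cXY H) (cXZ C - l * cXZ H) (cYZ C - l * cYZ H).

Lemma conic_evalp_subZ C H l X Y Z :
  conic_evalp (conic_subZ C H l) X Y Z = conic_evalp C X Y Z - l *: conic_evalp H X Y Z.
Proof. by rewrite /conic_evalp /= -!mul_polyC !rmorphB !rmorphM /=; ring. Qed.

Lemma conic_contact5_prop C H (Y : {poly L}) :
  Y`_2 != 0 -> conic_nonzero C -> conic_nonzero H ->
  'X^5 %| conic_evalp C ('X + u%:P) Y 1 -> 'X^5 %| conic_evalp H ('X + u%:P) Y 1 ->
  conic_prop C H.
Proof.
move=> y2 C_neq0 H_neq0 dvdC dvdH.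
have dyH : conic_dy H Y`_0 != 0.
  by apply/eqP => dyH0; apply: H_neq0; apply: conic_contact5_dy0_eq0 dyH0 dvdH.
(* C - l H has contact >= 5 and vanishing y-derivative at P, hence is 0. *)
pose l := conic_dy C Y`_0 / conic_dy H Y`_0.
have dyD : conic_dy (conic_subZ C H l) Y`_0 = 0.
  by rewrite /conic_dy /= /l; move: dyH; rewrite /conic_dy => dyH; field.
have dvdD : 'X^5 %| conic_evalp (conic_subZ C H l) ('X + u%:P) Y 1.
  by rewrite conic_evalp_subZ -mul_polyC dvdp_sub // dvdp_mull.
have /= [/subr0_eq eXX [/subr0_eq eYY [/subr0_eq eZZ [/subr0_eq eXY [/subr0_eq eXZ
    /subr0_eq eYZ]]]]] := conic_contact5_dy0_eq0 y2 dyD dvdD.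
exists l; split; last by rewrite eXX eYY eZZ eXY eXZ eYZ.
by apply/eqP => l0; apply: C_neq0; rewrite eXX eYY eZZ eXY eXZ eYZ l0 !mul0r.
Qed.

End ConicUniqueness.

(* P = (u : v : 1) is an inflection point of A x^n + B y^m = 1 exactly when
   [flex_num n m (A u^n) (B v^m)] vanishes. *)
Definition flex_num (L : fieldType) (N M al be : L) : L :=
  (N - 1) * M * be + (M - 1) * N * al.

Lemma flex_num_diag (L : fieldType) (N al be : L) :
  flex_num N N al be = (N - 1) * N * (al + be).
Proof. by rewrite /flex_num; ring. Qed.

Lemma flex_num1l (L : fieldType) (M al be : L) : flex_num 1 M al be = (M - 1) * al.
Proof. by rewrite /flex_num; ring. Qed.

Lemma flex_num1r (L : fieldType) (N al be : L) : flex_num N 1 al be = (N - 1) * be.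
Proof. by rewrite /flex_num; ring. Qed.

Lemma branch_coef2_neq0 (L : fieldType) (A B u v : L) (n m : nat) (Y : {poly L}) :
  A != 0 -> u != 0 -> v != 0 -> n.+2%:R != 0 :> L ->
  flex_num n.+2%:R m.+2%:R (A * u ^+ n.+2) (B * v ^+ m.+2) != 0 ->
  Y.[0] = v -> 'X^3 %| curve_poly A B u n.+2 m.+2 Y -> Y`_2 != 0.
Proof.
move=> A_neq0 u_neq0 v_neq0 n_neq0 flex Yv /dvdXnP coef0.
have taylor1 (P : {poly L}) : (P^`()).[0] = P`_1 by rewrite horner_coef0 coef_deriv mulr1n.
have taylor2 (P : {poly L}) : (P^`()^`()).[0] = P`_2 *+ 2.
  by rewrite horner_coef0 !coef_deriv mulr1n.
have dX : ('X + u%:P)^`() = 1 :> {poly L} by rewrite derivD derivX derivC addr0.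
have := taylor1 (curve_poly A B u n.+2 m.+2 Y); have := taylor2 (curve_poly A B u n.+2 m.+2 Y).
rewrite !coef0 // /curve_poly.
rewrite derivB derivC subr0 derivD !derivZ !deriv_exp dX mul1r.
rewrite derivD !derivZ derivMn deriv_exp dX mul1r derivMn derivM deriv_exp.
rewrite !(hornerMn, hornerD, hornerZ, hornerM, horner_exp, hornerC, hornerX).
rewrite (taylor2 Y) (taylor1 Y) Yv add0r.
rewrite /= => e2 e1; apply: contraNneq flex => y2_0; move: e2.
rewrite y2_0 !mul0rn mul0r add0r; set E2 := (_ + _); set E1 := (_ + _) in e1 => e2.
(* Eliminate Y`_1 between the coefficients of t and t^2 of the curve equation. *)
have key : n.+2%:R * (A * u ^+ n.+2) * v ^+ 2
      * flex_num n.+2%:R m.+2%:R (A * u ^+ n.+2) (B * v ^+ m.+2) =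
    m.+2%:R * (B * v ^+ m.+2) * (u ^+ 2 * v ^+ 2 * E2)
    - (m.+2%:R - 1) * (m.+2%:R * (B * v ^+ m.+2) * Y`_1 * u - n.+2%:R * (A * u ^+ n.+2) * v)
      * (u * v * E1).
  by rewrite /E1 /E2 /flex_num !exprS; ring.
have factor_neq0 : n.+2%:R * (A * u ^+ n.+2) * v ^+ 2 != 0.
  by rewrite mulf_neq0 ?expf_neq0 // mulf_neq0 // mulf_neq0 // expf_neq0.
by move: key; rewrite e1 e2 !mulr0 subr0 => /eqP; rewrite mulf_eq0 (negPf factor_neq0).
Qed.

Lemma osculating_of_contact5 (L : fieldType) (A B u v : L) (n m : nat) (H : conic L) :
  A != 0 -> B != 0 -> u != 0 -> v != 0 ->
  n.+2%:R != 0 :> L -> m.+2%:R != 0 :> L -> (0 < n)%N ->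
  A * u ^+ n.+2 + B * v ^+ m.+2 = 1 ->
  flex_num n.+2%:R m.+2%:R (A * u ^+ n.+2) (B * v ^+ m.+2) != 0 ->
  conic_nonzero H ->
  (forall Y : {poly L}, Y.[0] = v -> 'X^5 %| curve_poly A B u n.+2 m.+2 Y ->
      'X^5 %| conic_evalp H ('X + u%:P) Y 1) ->
  osculating_conic A B n.+2 m.+2 u v H.
Proof.
move=> A_neq0 B_neq0 u_neq0 v_neq0 n_neq0 m_neq0 n_gt0 on_curve flex H_neq0 contactH.
split=> //.
have H5 : imult_ge A B n.+2 m.+2 u v H 5.
  have [Y Yv dvdF] := branch_exists B_neq0 v_neq0 m_neq0 on_curve 5.
  by exists Y; split=> //; apply: contactH.
have [K0 bounded] := conic_contact_bounded u A_neq0 B_neq0 v_neq0 n_neq0 n_gt0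
  (isT : (0 < m.+2)%N) H_neq0.
have [k [k_ge5 Hk notHk1]] : exists k, [/\ (5 <= k)%N, imult_ge A B n.+2 m.+2 u v H k
    & ~ imult_ge A B n.+2 m.+2 u v H k.+1].
  apply: (exists_last_step H5 (K0 := K0)) => K K0_K [Y [Yv dvdF dvdH]].
  exact: (bounded K K0_K Y Yv dvdF dvdH).
exists k; split; first by split.
move=> C C_neq0 notCH [YC [YCv dvdFC dvdC]]; apply: notCH.
have [YH [YHv dvdFH dvdH]] := Hk.
have dvdFC5 := dvdXnW k_ge5 dvdFC; have dvdFH5 := dvdXnW k_ge5 dvdFH.
have dvdY := branch_unique B_neq0 v_neq0 m_neq0 YCv YHv dvdFC5 dvdFH5.
have dvdCH : 'X^5 %| conic_evalp C ('X + u%:P) YH 1.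
  rewrite -[conic_evalp C _ YH 1](subKr (conic_evalp C ('X + u%:P) YC 1)) conic_evalpB.
  by rewrite dvdp_sub ?dvdp_mulr // (dvdXnW k_ge5).
apply: conic_contact5_prop dvdCH (dvdXnW k_ge5 dvdH) => //.
apply: (branch_coef2_neq0 A_neq0 u_neq0 v_neq0 n_neq0 flex YHv).
exact: dvdXnW dvdFH5.
Qed.

(* Four times the determinant of the symmetric matrix of the conic. *)
Definition conic_det (L : fieldType) (C : conic L) : L :=
  4 * cXX C * cYY C * cZZ C - cXX C * cYZ C ^+ 2 - cZZ C * cXY C ^+ 2
  + cXY C * cXZ C * cYZ C - cYY C * cXZ C ^+ 2.

Lemma conic_det_irreducible (L : fieldType) (C : conic L) :
  conic_det C != 0 -> conic_irreducible C.
Proof.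
move=> det_neq0 l1 l2 l3 k1 k2 k3 [eXX [eYY [eZZ [eXY [eXZ eYZ]]]]].
by move: det_neq0; rewrite /conic_det eXX eYY eZZ eXY eXZ eYZ; apply/negP/negPn/eqP; ring.
Qed.

Lemma conic_det_nonzero (L : fieldType) (C : conic L) : conic_det C != 0 -> conic_nonzero C.
Proof.
move=> det_neq0 [eXX [eYY [eZZ [eXY [eXZ eYZ]]]]].
by move: det_neq0; rewrite /conic_det eXX eYY eZZ eXY eXZ eYZ !(mul0r, mulr0, subr0, addr0) eqxx.
Qed.

Section OsculatingCases.
Variables (L : fieldType) (A B u v : L) (n2 m2 p : nat).
Hypotheses (pL : p \in [pchar L]) (p_gt5 : (5 < p)%N).
Hypotheses (A_neq0 : A != 0) (B_neq0 : B != 0) (u_neq0 : u != 0) (v_neq0 : v != 0).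
Hypotheses (n_neq0 : n2.+2%:R != 0 :> L) (m_neq0 : m2.+2%:R != 0 :> L) (n2_gt0 : (0 < n2)%N).
Hypothesis on_curve : A * u ^+ n2.+2 + B * v ^+ m2.+2 = 1.

Local Notation F := (curve_poly A B u n2.+2 m2.+2).
Local Notation x := ('X + u%:P).

Let Au_neq0 k : A * u ^+ k != 0 := mulf_neq0 A_neq0 (expf_neq0 k u_neq0).
Let Bv_neq0 k : B * v ^+ k != 0 := mulf_neq0 B_neq0 (expf_neq0 k v_neq0).

Lemma natr_pchar_eq0 k : (p %| k)%N -> k%:R = 0 :> L.
Proof. by move=> dvd_k; apply/eqP; rewrite -(dvdn_pcharf pL). Qed.

Lemma two_neq0 : 2 != 0 :> L.
Proof. by rewrite -(dvdn_pcharf pL) gtnNdvd // (ltn_trans _ p_gt5). Qed.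

Lemma four_neq0 : 4 != 0 :> L.
Proof. by rewrite (_ : 4 = 2 * 2) ?mulf_neq0 ?two_neq0 //; ring. Qed.

Lemma natr_pchar_sub2 k : (p %| k)%N -> k.+2%:R = 2 :> L.
Proof. by move/natr_pchar_eq0 => k0; rewrite -addn2 natrD k0 add0r. Qed.

Lemma natr_pchar_sub1 k : (p %| k.+1)%N -> k.+2%:R = 1 :> L.
Proof. by move/natr_pchar_eq0 => k0; rewrite -addn1 natrD k0 add0r. Qed.

Lemma natr_pchar_add1 k : (p %| k.+3)%N -> k.+2%:R = -1 :> L.
Proof. by move/natr_pchar_eq0; rewrite -addn1 natrD => /eqP; rewrite addr_eq0 => /eqP. Qed.

Lemma natr_pchar_half k : (p %| 2 * k + 3)%N -> k.+2%:R = 2^-1 :> L.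
Proof.
move/natr_pchar_eq0; rewrite natrD natrM => e.
by apply: (mulfI two_neq0); rewrite mulfV ?two_neq0 // -[k.+2]addn2 natrD -[RHS]addr0 -e; ring.
Qed.

Lemma contact5_of_identity H Y N M (a b c : {poly L}) : (p %| N)%N -> (p %| M)%N ->
  Y.[0] = v -> 'X^5 %| F Y ->
  conic_evalp H x Y 1 = a * F Y + b * (x ^+ N - (u ^+ N)%:P) + c * (Y ^+ M - (v ^+ M)%:P) ->
  'X^5 %| conic_evalp H x Y 1.
Proof.
move=> pN pM Yv dvdF ->.
have p_ge5 : (5 <= p)%N := ltnW p_gt5.
have dvdx := dvdXnW p_ge5 (pchar_dvdXp_expB x pL pN).
have dvdY := dvdXnW p_ge5 (pchar_dvdXp_expB Y pL pM).
rewrite coefD coefX coefC add0r in dvdx; rewrite -horner_coef0 Yv in dvdY.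
by rewrite !dvdp_add // dvdp_mull.
Qed.

Lemma osc_irr_of_contact5 H :
  flex_num n2.+2%:R m2.+2%:R (A * u ^+ n2.+2) (B * v ^+ m2.+2) != 0 -> conic_det H != 0 ->
  (forall Y : {poly L}, Y.[0] = v -> 'X^5 %| F Y -> 'X^5 %| conic_evalp H x Y 1) ->
  osc_irr A B n2.+2 m2.+2 u v H.
Proof.
move=> flex det_neq0 contact; split; last exact: conic_det_irreducible.
by apply: osculating_of_contact5 => //; apply: conic_det_nonzero.
Qed.

Ltac expand_identity :=
  rewrite /conic_evalp /curve_poly /= !exprS ?expr_mulnD -!mul_polyC; ring.

Lemma osc_irr_sub2_sub2 : (p %| m2)%N && (p %| n2)%N ->
  osc_irr A B n2.+2 m2.+2 u v (mkConic (A * u ^+ n2) (B * v ^+ m2) (-1) 0 0 0).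
Proof.
case/andP=> hm hn; apply: osc_irr_of_contact5.
- rewrite (natr_pchar_sub2 hn) (natr_pchar_sub2 hm) flex_num_diag on_curve.
  by rewrite (_ : (2 - 1) * 2 * 1 = 2) ?two_neq0 //; ring.
- rewrite (_ : conic_det _ = - (4 * (A * u ^+ n2) * (B * v ^+ m2))) /conic_det /=; last by ring.
  by rewrite oppr_eq0 !mulf_neq0 ?four_neq0 ?expf_neq0.
- move=> Y Yv dvdF; apply: (contact5_of_identity (a := 1) (b := - A%:P * x ^+ 2)
    (c := - B%:P * Y ^+ 2) hn hm Yv dvdF); expand_identity.
Qed.

Lemma osc_irr_add1_add1 : (p %| m2.+3)%N && (p %| n2.+3)%N ->
  osc_irr A B n2.+2 m2.+2 u v (mkConic 0 0 0 (-1) (B * v ^+ m2.+3) (A * u ^+ n2.+3)).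
Proof.
case/andP=> hm hn; apply: osc_irr_of_contact5.
- rewrite (natr_pchar_add1 hn) (natr_pchar_add1 hm) flex_num_diag on_curve.
  by rewrite (_ : (-1 - 1) * -1 * 1 = 2) ?two_neq0 //; ring.
- rewrite (_ : conic_det _ = - (B * v ^+ m2.+3 * (A * u ^+ n2.+3))) /conic_det /=; last by ring.
  by rewrite oppr_eq0 mulf_neq0 ?Au_neq0 ?Bv_neq0.
- move=> Y Yv dvdF; apply: (contact5_of_identity (a := x * Y) (b := - A%:P * Y)
    (c := - B%:P * x) hn hm Yv dvdF); expand_identity.
Qed.

Lemma osc_irr_half_half : (p %| 2 * m2 + 3)%N && (p %| 2 * n2 + 3)%N ->
  osc_irr A B n2.+2 m2.+2 u v
    (mkConic (A ^+ 4 * u ^+ (4 * n2 + 6)) (B ^+ 4 * v ^+ (4 * m2 + 6)) 1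
             (- (2 * A ^+ 2 * B ^+ 2 * u ^+ (2 * n2 + 3) * v ^+ (2 * m2 + 3)))
             (- (2 * A ^+ 2 * u ^+ (2 * n2 + 3)))
             (- (2 * B ^+ 2 * v ^+ (2 * m2 + 3)))).
Proof.
case/andP=> hm hn; apply: osc_irr_of_contact5.
- rewrite (natr_pchar_half hn) (natr_pchar_half hm) flex_num_diag on_curve.
  rewrite (_ : (2^-1 - 1) * 2^-1 * 1 = - (2 * 2)^-1) ?oppr_eq0 ?invr_eq0 ?mulf_neq0 ?two_neq0 //.
  by field; rewrite ?four_neq0 ?two_neq0.
- pose P := A ^+ 2 * u ^+ (2 * n2 + 3); pose Q := B ^+ 2 * v ^+ (2 * m2 + 3).
  rewrite (_ : conic_det _ = - (4 * 4 * P ^+ 2 * Q ^+ 2)) /conic_det /=.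
    by rewrite oppr_eq0 !mulf_neq0 ?four_neq0 ?expf_neq0 ?mulf_neq0 ?expf_neq0.
  by rewrite /P /Q !expr_mulnD; ring.
- (* Modulo the Frobenius relations the conic is Heron's form
     -(al + be + 1)(-al + be + 1)(al - be + 1)(al + be - 1) in al = A x^n,
     be = B y^m, and its last factor is the curve equation. *)
  move=> Y Yv dvdF.
  pose al := A%:P * x ^+ n2.+2; pose be := B%:P * Y ^+ m2.+2.
  pose Pt := (A ^+ 2 * u ^+ (2 * n2 + 3))%:P * x.
  pose Qt := (B ^+ 2 * v ^+ (2 * m2 + 3))%:P * Y.
  pose a2 := A%:P ^+ 2 * x * x ^+ (2 * n2 + 3).
  pose b2 := B%:P ^+ 2 * Y * Y ^+ (2 * m2 + 3).
  apply: (contact5_of_identity (a := - ((al + be + 1) * (- al + be + 1) * (al - be + 1)))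
    (b := - (A%:P ^+ 2 * x) * (Pt + a2 - 2 * Qt - 2))
    (c := - (B%:P ^+ 2 * Y) * (Qt + b2 - 2 * a2 - 2)) hn hm Yv dvdF).
  rewrite /al /be /Pt /Qt /a2 /b2; expand_identity.
Qed.

Lemma osc_irr_half_sub1 : (p %| 2 * m2 + 3)%N && (p %| n2.+1)%N ->
  osc_irr A B n2.+2 m2.+2 u v
    (mkConic (- (A ^+ 2 * u ^+ (2 * n2 + 2))) 0 (-1) 0
             (2 * A * u ^+ n2.+1) (B ^+ 2 * v ^+ (2 * m2 + 3))).
Proof.
case/andP=> hm hn; apply: osc_irr_of_contact5.
- rewrite (natr_pchar_sub1 hn) (natr_pchar_half hm) flex_num1l.
  rewrite (_ : 2^-1 - 1 = - 2^-1); last by field; rewrite two_neq0.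
  by rewrite mulf_neq0 ?Au_neq0 ?oppr_eq0 ?invr_eq0 ?two_neq0.
- rewrite (_ : conic_det _ = A ^+ 2 * u ^+ (2 * n2 + 2) * (B ^+ 2 * v ^+ (2 * m2 + 3)) ^+ 2).
    by rewrite !mulf_neq0 ?expf_neq0 ?mulf_neq0 ?expf_neq0.
  by rewrite /conic_det /=; ring.
- (* Modulo the Frobenius relations the conic is be^2 - (al - 1)^2
     = (be - al + 1)(be + al - 1), with al = A x^n and be = B y^m. *)
  move=> Y Yv dvdF.
  pose al := A%:P * x ^+ n2.+2; pose be := B%:P * Y ^+ m2.+2.
  pose Dx := x ^+ n2.+1 - (u ^+ n2.+1)%:P.
  apply: (contact5_of_identity (a := be - al + 1) (b := A%:P * x * (2 * (al - 1) - A%:P * x * Dx))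
    (c := - (B%:P ^+ 2 * Y)) hn hm Yv dvdF).
  rewrite /al /be /Dx; expand_identity.
Qed.

Lemma osc_irr_add1_sub1 : (p %| m2.+3)%N && (p %| n2.+1)%N ->
  osc_irr A B n2.+2 m2.+2 u v (mkConic 0 0 (B * v ^+ m2.+3) (A * u ^+ n2.+1) 0 (-1)).
Proof.
case/andP=> hm hn; apply: osc_irr_of_contact5.
- rewrite (natr_pchar_sub1 hn) (natr_pchar_add1 hm) flex_num1l.
  rewrite (_ : -1 - 1 = - 2); last by ring.
  by rewrite mulf_neq0 ?Au_neq0 ?oppr_eq0 ?two_neq0.
- rewrite (_ : conic_det _ = - (B * v ^+ m2.+3 * (A * u ^+ n2.+1) ^+ 2)) /conic_det /=.
    by rewrite oppr_eq0 mulf_neq0 ?expf_neq0 ?Au_neq0 ?Bv_neq0.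
  by ring.
- move=> Y Yv dvdF; apply: (contact5_of_identity (a := Y) (b := - A%:P * x * Y)
    (c := - B%:P) hn hm Yv dvdF); expand_identity.
Qed.

Lemma osc_irr_sub2_sub1 : (p %| m2)%N && (p %| n2.+1)%N ->
  osc_irr A B n2.+2 m2.+2 u v (mkConic 0 (B * v ^+ m2) (-1) 0 (A * u ^+ n2.+1) 0).
Proof.
case/andP=> hm hn; apply: osc_irr_of_contact5.
- rewrite (natr_pchar_sub1 hn) (natr_pchar_sub2 hm) flex_num1l.
  by rewrite (_ : 2 - 1 = 1) ?mul1r ?Au_neq0 //; ring.
- rewrite (_ : conic_det _ = - (B * v ^+ m2 * (A * u ^+ n2.+1) ^+ 2)) /conic_det /=.
    by rewrite oppr_eq0 mulf_neq0 ?expf_neq0 ?Au_neq0 ?Bv_neq0.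
  by ring.
- move=> Y Yv dvdF; apply: (contact5_of_identity (a := 1) (b := - A%:P * x)
    (c := - B%:P * Y ^+ 2) hn hm Yv dvdF); expand_identity.
Qed.

Lemma osc_irr_sub1_sub2 : (p %| m2.+1)%N && (p %| n2)%N ->
  osc_irr A B n2.+2 m2.+2 u v (mkConic (A * u ^+ n2) 0 (-1) 0 0 (B * v ^+ m2.+1)).
Proof.
case/andP=> hm hn; apply: osc_irr_of_contact5.
- rewrite (natr_pchar_sub2 hn) (natr_pchar_sub1 hm) flex_num1r.
  by rewrite (_ : 2 - 1 = 1) ?mul1r ?Bv_neq0 //; ring.
- rewrite (_ : conic_det _ = - (A * u ^+ n2 * (B * v ^+ m2.+1) ^+ 2)) /conic_det /=.
    by rewrite oppr_eq0 mulf_neq0 ?expf_neq0 ?Au_neq0 ?Bv_neq0.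
  by ring.
- move=> Y Yv dvdF; apply: (contact5_of_identity (a := 1) (b := - A%:P * x ^+ 2)
    (c := - B%:P * Y) hn hm Yv dvdF); expand_identity.
Qed.

Lemma osc_irr_sub1_half : (p %| m2.+1)%N && (p %| 2 * n2 + 3)%N ->
  osc_irr A B n2.+2 m2.+2 u v
    (mkConic 0 (- (B ^+ 2 * v ^+ (2 * m2 + 2))) (-1) 0
             (A ^+ 2 * u ^+ (2 * n2 + 3)) (2 * B * v ^+ m2.+1)).
Proof.
case/andP=> hm hn; apply: osc_irr_of_contact5.
- rewrite (natr_pchar_half hn) (natr_pchar_sub1 hm) flex_num1r.
  rewrite (_ : 2^-1 - 1 = - 2^-1); last by field; rewrite two_neq0.
  by rewrite mulf_neq0 ?Bv_neq0 ?oppr_eq0 ?invr_eq0 ?two_neq0.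
- rewrite (_ : conic_det _ = B ^+ 2 * v ^+ (2 * m2 + 2) * (A ^+ 2 * u ^+ (2 * n2 + 3)) ^+ 2).
    by rewrite !mulf_neq0 ?expf_neq0 ?mulf_neq0 ?expf_neq0.
  by rewrite /conic_det /=; ring.
- move=> Y Yv dvdF.
  pose al := A%:P * x ^+ n2.+2; pose be := B%:P * Y ^+ m2.+2.
  pose Dy := Y ^+ m2.+1 - (v ^+ m2.+1)%:P.
  apply: (contact5_of_identity (a := al - be + 1) (b := - (A%:P ^+ 2 * x))
    (c := B%:P * Y * (2 * (be - 1) - B%:P * Y * Dy)) hn hm Yv dvdF).
  rewrite /al /be /Dy; expand_identity.
Qed.

Lemma osc_irr_sub1_add1 : (p %| m2.+1)%N && (p %| n2.+3)%N ->
  osc_irr A B n2.+2 m2.+2 u v (mkConic 0 0 (A * u ^+ n2.+3) (B * v ^+ m2.+1) (-1) 0).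
Proof.
case/andP=> hm hn; apply: osc_irr_of_contact5.
- rewrite (natr_pchar_add1 hn) (natr_pchar_sub1 hm) flex_num1r.
  rewrite (_ : -1 - 1 = - 2); last by ring.
  by rewrite mulf_neq0 ?Bv_neq0 ?oppr_eq0 ?two_neq0.
- rewrite (_ : conic_det _ = - (A * u ^+ n2.+3 * (B * v ^+ m2.+1) ^+ 2)) /conic_det /=.
    by rewrite oppr_eq0 mulf_neq0 ?expf_neq0 ?Au_neq0 ?Bv_neq0.
  by ring.
- move=> Y Yv dvdF; apply: (contact5_of_identity (a := x) (b := - A%:P)
    (c := - B%:P * x * Y) hn hm Yv dvdF); expand_identity.
Qed.

End OsculatingCases.

Lemma shift2E k :
  ((k.+2 - 2 = k)%N * (k.+2 + 1 = k.+3)%N * (2 * k.+2 - 1 = 2 * k + 3)%N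
   * (4 * k.+2 - 2 = 4 * k + 6)%N * (2 * k.+2 - 2 = 2 * k + 2)%N * (k.+2 - 1 = k.+1)%N)%type.
Proof. by do !split; lia. Qed.

Theorem proposition3p6 (p : nat) (F : finFieldType) (a b : F) (m n : nat) :
  prime p -> (5 < p)%N -> p \in [pchar F] ->
  a != 0 -> b != 0 -> (2 < m)%N -> (m <= n)%N -> ~~ (p %| m * n)%N ->
  classical_wrt a b n m 1 -> ~ classical_wrt a b n m 2 ->
  forall (L : fieldType) (iota : {rmorphism F -> L}) (u v : L),
    iota a * u ^+ n + iota b * v ^+ m = 1 -> u != 0 -> v != 0 ->
    let A := iota a in let B := iota b in
    ((p %| m - 2)%N && (p %| n - 2)%N ->
          osc_irr A B n m u v
            (mkConic (A * u ^+ (n - 2)) (B * v ^+ (m - 2)) (-1) 0 0 0)) /\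
        ((p %| m + 1)%N && (p %| n + 1)%N ->
          osc_irr A B n m u v
            (mkConic 0 0 0 (-1) (B * v ^+ (m + 1)) (A * u ^+ (n + 1)))) /\
        ((p %| 2 * m - 1)%N && (p %| 2 * n - 1)%N ->
          osc_irr A B n m u v
            (mkConic (A ^+ 4 * u ^+ (4 * n - 2)) (B ^+ 4 * v ^+ (4 * m - 2)) 1
                     (- (2%:R * A ^+ 2 * B ^+ 2 * u ^+ (2 * n - 1) * v ^+ (2 * m - 1)))
                     (- (2%:R * A ^+ 2 * u ^+ (2 * n - 1)))
                     (- (2%:R * B ^+ 2 * v ^+ (2 * m - 1))))) /\
        ((p %| 2 * m - 1)%N && (p %| n - 1)%N ->
          osc_irr A B n m u v
            (mkConic (- (A ^+ 2 * u ^+ (2 * n - 2))) 0 (-1) 0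
                     (2%:R * A * u ^+ (n - 1)) (B ^+ 2 * v ^+ (2 * m - 1)))) /\
        ((p %| m + 1)%N && (p %| n - 1)%N ->
          osc_irr A B n m u v
            (mkConic 0 0 (B * v ^+ (m + 1)) (A * u ^+ (n - 1)) 0 (-1))) /\
        ((p %| m - 2)%N && (p %| n - 1)%N ->
          osc_irr A B n m u v
            (mkConic 0 (B * v ^+ (m - 2)) (-1) 0 (A * u ^+ (n - 1)) 0)) /\
        ((p %| m - 1)%N && (p %| n - 2)%N ->
          osc_irr A B n m u v
            (mkConic (A * u ^+ (n - 2)) 0 (-1) 0 0 (B * v ^+ (m - 1)))) /\
        ((p %| m - 1)%N && (p %| 2 * n - 1)%N ->
          osc_irr A B n m u v
            (mkConic 0 (- (B ^+ 2 * v ^+ (2 * m - 2))) (-1) 0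
                     (A ^+ 2 * u ^+ (2 * n - 1)) (2%:R * B * v ^+ (m - 1)))) /\
        ((p %| m - 1)%N && (p %| n + 1)%N ->
          osc_irr A B n m u v
            (mkConic 0 0 (A * u ^+ (n + 1)) (B * v ^+ (m - 1)) (-1) 0)).
Proof.
(* Primality of p follows from p \in [pchar F]. *)
move=> _ p_gt5 pF a_neq0 b_neq0 m_gt2 m_le_n p_ndvd _ _ L iota u v on_curve u_neq0 v_neq0 A B.
have pL : p \in [pchar L] := rmorph_pchar iota pF.
have A_neq0 : A != 0 by rewrite fmorph_eq0.
have B_neq0 : B != 0 by rewrite fmorph_eq0.
have n_neq0 : n%:R != 0 :> L.
  by rewrite -(dvdn_pcharf pL); apply: contra p_ndvd; apply: dvdn_mull.
have m_neq0 : m%:R != 0 :> L.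
  by rewrite -(dvdn_pcharf pL); apply: contra p_ndvd; apply: dvdn_mulr.
have [n2 n_eq] : exists n2, n = n2.+2 by exists (n - 2)%N; lia.
have [m2 m_eq] : exists m2, m = m2.+2 by exists (m - 2)%N; lia.
have n2_gt0 : (0 < n2)%N by lia.
subst n m; rewrite !shift2E.
split; first exact: osc_irr_sub2_sub2.
split; first exact: osc_irr_add1_add1.
split; first exact: osc_irr_half_half.
split; first exact: osc_irr_half_sub1.
split; first exact: osc_irr_add1_sub1.
split; first exact: osc_irr_sub2_sub1.
split; first exact: osc_irr_sub1_sub2.
split; first exact: osc_irr_sub1_half.
exact: osc_irr_sub1_add1.
Qed.
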